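(* Let $\mathcal{X}$ be a connected $n$-premaniplex with base flag $x_0$ and $N=\operatorname{Stab}_{\mathcal{C}^n}(x_0)$, and let $(\mathcal{Y},\eta)$ be an $(n,m)$-voltage operator that preserves connectivity, with base flag $y_0$ of $\mathcal{Y}$, $L=\operatorname{Stab}_{\mathcal{C}^m}(y_0)$ and $\zeta:L\to\mathcal{C}^n$, $\zeta(\omega)=\eta(W_\omega(y_0))$. If $\upsilon\in\operatorname{N}_{\mathcal{C}^m}(\zeta^{-1}(N))\setminus L$, then $\mathcal{X}$ covers the premaniplex $\mathcal{Z}_\upsilon=\mathcal{C}^n/\zeta(L\cap L^\upsilon)$.
   Context: An $n$-premaniplex is an edge-coloured graph (semi-edges and parallel edges allowed) with colours $\{0,\dots,n-1\}$ such that every vertex (flag) is the start of exactly one dart of each colour, and for $|i-j|\ge2$ alternating $i,j$-paths of length 4 are closed; $x^i$ is the $i$-adjacent flag of $x$. $\mathcal{C}^n=\langle r_0,\dots,r_{n-1}\mid r_i^2,\ (r_ir_j)^2\ (|i-j|\ge2)\rangle$ acts on the left on flags by $r_ix=x^i$. A covering is a surjective map of flags preserving $i$-adjacency for all $i$. $L^\upsilon=\upsilon^{-1}L\upsilon$. For a subgroup $K\le\mathcal{C}^n$, the coset premaniplex $\mathcal{C}^n/K$ has flags the left cosets $\omega K$ with $(\omega K)^i=r_i\omega K$. For a flag $y$ of an $m$-premaniplex $\mathcal{Y}$ and $\omega\in\mathcal{C}^m$, $W_\omega(y)$ is the homotopy class of paths from $y$ whose colour sequence $i_1,\dots,i_k$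 satisfies $r_{i_k}\cdots r_{i_1}=\omega$; these form the fundamental groupoid $\Pi(\mathcal{Y})$. A voltage assignment $\eta:\Pi(\mathcal{Y})\to\mathcal{C}^n$ satisfies $\eta(W_1W_2)=\eta(W_2)\eta(W_1)$; $(\mathcal{Y},\eta)$ is an $(n,m)$-voltage operator. $\mathcal{X}\rtimes_\eta\mathcal{Y}$ has flags $\mathcal{X}\times\mathcal{Y}$ and $(x,y)^i=(\eta(W_{r_i}(y))x,r_iy)$, $i\in\{0,\dots,m-1\}$. The operator preserves connectivity if $\mathcal{X}\rtimes_\eta\mathcal{Y}$ is connected whenever $\mathcal{X}$ is. *)

From mathcomp Require Import all_boot.
From Stdlib Require Import FunctionalExtensionality.
Unset Strict Implicit. Unset Printing Implicit Defensive.

(* An element of the group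
   C^n = < r_0,...,r_{n-1} | r_i^2, (r_i r_j)^2 (|i-j|>=2) >
   is represented by a word [:: a1; ...; ak] standing for r_{a1} ... r_{ak};
   product = concatenation, identity = [::], inverse = rev. *)
Definition far {n : nat} (i j : 'I_n) : bool := (i.+1 < j) || (j.+1 < i).

(* Equality in C^n: the congruence generated by the defining relations. *)
Inductive weq {n : nat} : seq 'I_n -> seq 'I_n -> Prop :=
| weq_refl u : weq u u
| weq_sym u v : weq u v -> weq v u
| weq_trans u v w : weq u v -> weq v w -> weq u w
| weq_cat u u' v v' : weq u u' -> weq v v' -> weq (u ++ v) (u' ++ v')
| weq_invol (i : 'I_n) : weq [:: i; i] [::]
| weq_comm (i j : 'I_n) : far i j -> weq [:: i; j; i; j] [::].

(* A "subset" of C^n, as a predicate on words (used only for weq-closed ones). *)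
Definition subgrp (n : nat) := seq 'I_n -> Prop.

(* An edge-coloured graph with colours 'I_n in which every flag is the start of
   exactly one dart of each colour: adj i x = x^i (semi-edge when adj i x = x). *)
Record adjsys (n : nat) := AdjSys { flag :> Type; adj : 'I_n -> flag -> flag }.
Arguments adj {n} a i x.
Arguments flag {n} a.

Definition is_premaniplex {n : nat} (X : adjsys n) : Prop :=
  (forall (i : 'I_n) (x : X), adj X i (adj X i x) = x) /\
  (forall (i j : 'I_n) (x : X), far i j ->
      adj X j (adj X i (adj X j (adj X i x))) = x).

Fixpoint act {n : nat} (X : adjsys n) (w : seq 'I_n) (x : X) : X :=
  match w with
  | [::] => x
  | i :: w' => adj X i (act X w' x)
  end.

Definition connected {n : nat} (X : adjsys n) : Prop :=
  forall x y : X, exists w : seq 'I_n, act X w x = y.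

Definition stab {n : nat} (X : adjsys n) (x0 : X) : subgrp n :=
  fun w => act X w x0 = x0.

(* A voltage assignment on the fundamental groupoid of Y: the homotopy class
   W_w(y) is identified with the pair (y, w), w in C^m; eta y w = eta(W_w(y)).
   Well-definedness on C^m and eta(W1 W2) = eta(W2) eta(W1), where
   W_w(y) W_w'(w y) = W_{w' w}(y). *)
Definition is_voltage {n m : nat} (Y : adjsys m)
    (eta : Y -> seq 'I_m -> seq 'I_n) : Prop :=
  (forall (y : Y) (w w' : seq 'I_m), weq w w' -> weq (eta y w) (eta y w')) /\
  (forall (y : Y) (w w' : seq 'I_m),
      weq (eta y (w' ++ w)) (eta (act Y w y) w' ++ eta y w)).

Definition vprod {n m : nat} (X : adjsys n) (Y : adjsys m)
    (eta : Y -> seq 'I_m -> seq 'I_n) : adjsys m :=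
  @AdjSys m (X * Y)%type
    (fun i p => (act X (eta p.2 [:: i]) p.1, adj Y i p.2)).

Definition preserves_connectivity {n m : nat} (Y : adjsys m)
    (eta : Y -> seq 'I_m -> seq 'I_n) : Prop :=
  forall X : adjsys n, is_premaniplex X -> connected X ->
    connected (vprod X Y eta).

Definition covers {n : nat} (X Z : adjsys n) : Prop :=
  exists f : X -> Z, (forall z : Z, exists x : X, f x = z) /\
    (forall (i : 'I_n) (x : X), f (adj X i x) = adj Z i (f x)).

Definition coset {n : nat} (K : subgrp n) (w : seq 'I_n) : seq 'I_n -> Prop :=
  fun v => K (rev w ++ v).

Definition coset_flag {n : nat} (K : subgrp n) :=
  {S : seq 'I_n -> Prop | exists w, S = coset K w}.

Lemma coset_adj_proof {n : nat} (K : subgrp n) (i : 'I_n) (S : coset_flag K) :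
  exists w, (fun v => sval S (i :: v)) = coset K w.
Proof.
case: S => S [w Sw] /=; rewrite Sw; exists (i :: w).
apply: functional_extensionality => v.
by rewrite /coset rev_cons cat_rcons.
Qed.

Definition coset_premaniplex {n : nat} (K : subgrp n) : adjsys n :=
  @AdjSys n (coset_flag K)
    (fun i S => exist _ (fun v => sval S (i :: v)) (coset_adj_proof K i S)).

(* Conjugate H^u = u^{-1} H u. *)
Definition conj_sub {n : nat} (H : subgrp n) (u : seq 'I_n) : subgrp n :=
  fun w => H (u ++ w ++ rev u).

Definition normalizes {n : nat} (u : seq 'I_n) (H : subgrp n) : Prop :=
  forall w, H w <-> conj_sub H u w.

Definition sub_meet {n : nat} (H K : subgrp n) : subgrp n :=
  fun w => H w /\ K w.

Definition zeta_preim {n m : nat} (Y : adjsys m)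
    (eta : Y -> seq 'I_m -> seq 'I_n) (y0 : Y) (N : subgrp n) : subgrp m :=
  fun w => stab Y y0 w /\ N (eta y0 w).

Definition zeta_image {n m : nat} (Y : adjsys m)
    (eta : Y -> seq 'I_m -> seq 'I_n) (y0 : Y) (H : subgrp m) : subgrp n :=
  fun v => exists w, H w /\ weq v (eta y0 w).

(** Testing the connectivity of [U ⋊_η Y] for the universal premaniplex
    [U = C^n / 1] shows that every element of [C^n] is [ζ(w)] for some [w]
    in [L]; if [ζ(w)] lies in [N] then [w ∈ ζ^-1(N)], and since [υ]
    normalises [ζ^-1(N) ⊆ L] also [w ∈ L^υ].  Hence
    [N ≤ K := ζ(L ∩ L^υ)], and the connected premaniplex [X ≅ C^n / N]
    covers [C^n / K] through [w x0 ↦ w K]. *)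

From Stdlib Require Import FunctionalExtensionality PropExtensionality ProofIrrelevance.
From mathcomp Require Import all_boot.

#[local] Arguments weq_sym {n u v}.
#[local] Arguments weq_trans {n u v w}.
#[local] Arguments weq_cat {n u u' v v'}.

Definition weq_closed {n : nat} (K : subgrp n) : Prop :=
  forall u v, weq u v -> K u -> K v.

Definition cat_closed {n : nat} (K : subgrp n) : Prop :=
  forall u v, K u -> K v -> K (u ++ v).

Section Words.

Context {n : nat}.
Implicit Types u v w : seq 'I_n.

Lemma far_sym (i j : 'I_n) : far i j = far j i.
Proof. by rewrite /far orbC. Qed.

Lemma weq_catl u {v v'} : weq v v' -> weq (u ++ v) (u ++ v').
Proof. exact: weq_cat (weq_refl u). Qed.

Lemma weq_catr {u u'} v : weq u u' -> weq (u ++ v) (u' ++ v).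
Proof. by move/weq_cat; apply; apply: weq_refl. Qed.

Lemma weq_revK u : weq (rev u ++ u) [::].
Proof.
elim: u => [|i u IH]; first exact: weq_refl.
rewrite rev_cons cat_rcons; apply: weq_trans IH; apply: weq_catl.
exact: weq_catr (weq_invol i).
Qed.

Lemma weq_revKr u : weq (u ++ rev u) [::].
Proof. by have := weq_revK (rev u); rewrite revK. Qed.

Lemma weq_cancell u v : weq (rev u ++ (u ++ v)) v.
Proof. by rewrite catA; apply: weq_catr (weq_revK u). Qed.

Lemma weq_cancelr u v : weq (u ++ (rev u ++ v)) v.
Proof. by rewrite catA; apply: weq_catr (weq_revKr u). Qed.

Lemma weq_rev u v : weq u v -> weq (rev u) (rev v).
Proof.
elim=> {u v} [u|u v _|u v w _ IHuv _ IHvw|u u' v v' _ IHu _ IHv|i|i j fij].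
- exact: weq_refl.
- exact: weq_sym.
- exact: weq_trans IHuv IHvw.
- by rewrite !rev_cat; apply: weq_cat.
- exact: weq_invol.
- by apply: weq_comm; rewrite far_sym.
Qed.

Lemma weq_rev_cat_nil u v : weq (rev u ++ v) [::] -> weq u v.
Proof.
move=> uv; apply: weq_sym; apply: weq_trans (weq_sym (weq_cancelr u v)) _.
by have := weq_catl u uv; rewrite cats0.
Qed.

End Words.

Section Action.

Context {n : nat}.
Implicit Types u v w : seq 'I_n.

Lemma act_cat (X : adjsys n) u v (x : X) : act X (u ++ v) x = act X u (act X v x).
Proof. by elim: u => //= i u ->. Qed.

Lemma act_weq {X : adjsys n} (HX : is_premaniplex X) {u v} :
  weq u v -> forall x : X, act X u x = act X v x.
Proof.
case: HX => adjK adj_far.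
elim=> {u v} [u|u v _ IH|u v w _ IHuv _ IHvw|u u' v v' _ IHu _ IHv|i|i j fij] x.
- by [].
- by rewrite IH.
- by rewrite IHuv IHvw.
- by rewrite !act_cat IHv IHu.
- exact: adjK.
- by apply: adj_far; rewrite far_sym.
Qed.

Lemma stab_weq_closed {X : adjsys n} (x0 : X) :
  is_premaniplex X -> weq_closed (stab X x0).
Proof. by move=> HX u v uv; rewrite /stab (act_weq HX uv). Qed.

Lemma stab_cat_closed {X : adjsys n} (x0 : X) : cat_closed (stab X x0).
Proof. by move=> u v Su Sv; rewrite /stab act_cat Sv Su. Qed.

End Action.

Section Subgroups.

Context {n : nat}.
Implicit Types (H K : subgrp n) (u : seq 'I_n).

Lemma sub_meet_cat_closed H K :
  cat_closed H -> cat_closed K -> cat_closed (sub_meet H K).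
Proof. by move=> Hcat Kcat u v [Hu Ku] [Hv Kv]; split; [apply: Hcat | apply: Kcat]. Qed.

Lemma conj_sub_cat_closed H u :
  weq_closed H -> cat_closed H -> cat_closed (conj_sub H u).
Proof.
move=> Hweq Hcat a b Ha Hb; apply: Hweq (Hcat _ _ Ha Hb).
rewrite -!catA; do 2!apply: weq_catl.
exact: weq_cancell.
Qed.

End Subgroups.

Section Voltage.

Context {n m : nat} {Y : adjsys m} {eta : Y -> seq 'I_m -> seq 'I_n}.
Hypothesis Heta : is_voltage Y eta.

Lemma eta_nil (y : Y) : weq (eta y [::]) [::].
Proof.
set e := eta y [::].
have ee : weq e (e ++ e) := Heta.2 y [::] [::].
apply: weq_trans (weq_sym (weq_cancell e e)) _.
exact: weq_trans (weq_catl _ (weq_sym ee)) (weq_revK e).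
Qed.

Lemma act_vprod {X : adjsys n} (HX : is_premaniplex X) w (x : X) (y : Y) :
  act (vprod X Y eta) w (x, y) = (act X (eta y w) x, act Y w y).
Proof.
elim: w => [|i w IH] /=; first by rewrite (act_weq HX (eta_nil y)).
rewrite IH /= -act_cat; congr (_, _).
exact: (act_weq HX (weq_sym (Heta.2 y w [:: i]))).
Qed.

Variable y0 : Y.

Lemma zeta_image_weq_closed (H : subgrp m) : weq_closed (zeta_image Y eta y0 H).
Proof.
by move=> u v uv [w [Hw uw]]; exists w; split; last exact: weq_trans (weq_sym uv) uw.
Qed.

Lemma zeta_image_cat_closed (H : subgrp m) :
  (forall w, H w -> stab Y y0 w) -> cat_closed H ->
  cat_closed (zeta_image Y eta y0 H).
Proof.
move=> HL Hcat a b [w1 [Hw1 aw1]] [w2 [Hw2 bw2]].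
exists (w1 ++ w2); split; first exact: Hcat.
apply: weq_trans (weq_cat aw1 bw2) _.
by have := Heta.2 y0 w2 w1; rewrite (HL _ Hw2); apply: weq_sym.
Qed.

End Voltage.

Section CosetPremaniplex.

Context {n : nat} {K : subgrp n}.
Implicit Types u w : seq 'I_n.

Lemma coset_flag_eq (S T : coset_flag K) : sval S = sval T -> S = T.
Proof.
by case: S T => [S pS] [T pT] /= ST; subst T; rewrite (proof_irrelevance _ pS pT).
Qed.

Definition coset_flag_of w : coset_premaniplex K :=
  exist _ (coset K w) (ex_intro _ w erefl).

Lemma act_cosetE w {u} {S : coset_premaniplex K} :
  sval S = coset K u -> sval (act _ w S) = coset K (w ++ u).
Proof.
move=> Su; elim: w => [|i w IH] //=; rewrite IH.
by apply: functional_extensionality => v; rewrite /coset rev_cons cat_rcons.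
Qed.

Hypothesis Kweq : weq_closed K.

Lemma coset_weq u w : weq u w -> coset K u = coset K w.
Proof.
move=> uw; apply: functional_extensionality => v.
by apply: propositional_extensionality; split; apply: Kweq;
  apply: weq_catr; apply: weq_rev; [|apply: weq_sym].
Qed.

Lemma coset_premaniplex_is_premaniplex : is_premaniplex (coset_premaniplex K).
Proof.
split=> [i S | i j S fij]; have [w Sw] := svalP S; apply: coset_flag_eq.
- rewrite (act_cosetE [:: i; i] Sw) Sw /=; apply: coset_weq.
  exact: weq_catr (weq_invol i).
- rewrite (act_cosetE [:: j; i; j; i] Sw) Sw /=; apply: coset_weq.
  by rewrite far_sym in fij; exact: weq_catr (weq_comm j i fij).
Qed.

Lemma coset_premaniplex_connected : connected (coset_premaniplex K).
Proof.
move=> S T; have [a Sa] := svalP S; have [b Tb] := svalP T.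
exists (b ++ rev a); apply: coset_flag_eq.
rewrite (act_cosetE _ Sa) Tb /=; apply: coset_weq.
by rewrite -catA -[b in weq _ b]cats0; apply: weq_catl; apply: weq_revK.
Qed.

End CosetPremaniplex.

Arguments coset_flag_of {n} K w.

Section Surjectivity.

Context {n m : nat} {Y : adjsys m} {eta : Y -> seq 'I_m -> seq 'I_n}.
Hypotheses (Heta : is_voltage Y eta) (Hpres : preserves_connectivity Y eta).
Variable y0 : Y.

(* Connect [(1, y0)] to [(a, y0)] in [(C^n / 1) ⋊_η Y]. *)
Lemma zeta_surjective a : exists w, stab Y y0 w /\ weq (eta y0 w) a.
Proof.
pose K1 : subgrp n := fun u => weq u [::].
have K1weq : weq_closed K1 by move=> u v uv; apply: weq_trans (weq_sym uv).
have HU := coset_premaniplex_is_premaniplex K1weq.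
have [w] := Hpres _ HU (coset_premaniplex_connected K1weq)
  (coset_flag_of K1 [::], y0) (coset_flag_of K1 a, y0).
rewrite (act_vprod Heta HU) => -[eU Lw]; exists w; split=> //.
have := act_cosetE (eta y0 w) (S := coset_flag_of K1 [::]) erefl.
rewrite eU cats0 /= => aw; apply: weq_rev_cat_nil.
by move/(f_equal (fun S => S a)): aw; rewrite /coset /K1 => <-; apply: weq_revK.
Qed.

Lemma stab_sub_zeta_image (X : adjsys n) (x0 : X) (ups : seq 'I_m) :
  is_premaniplex X -> normalizes ups (zeta_preim Y eta y0 (stab X x0)) ->
  forall a, stab X x0 a ->
  zeta_image Y eta y0 (sub_meet (stab Y y0) (conj_sub (stab Y y0) ups)) a.
Proof.
move=> HX Hnorm a Na; have [w [Lw wa]] := zeta_surjective a.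
have Nw : zeta_preim Y eta y0 (stab X x0) w.
  by split; rewrite // /stab (act_weq HX wa).
have [Lw' _] := (Hnorm w).1 Nw.
by exists w; split; [split | apply: weq_sym].
Qed.

End Surjectivity.

Section CosetCover.

Context {n : nat} {X : adjsys n} (x0 : X) {K : subgrp n}.
Hypotheses (HX : is_premaniplex X) (HXc : connected X).
Hypotheses (Kweq : weq_closed K) (Kcat : cat_closed K)
  (stab_sub_K : forall w, stab X x0 w -> K w).

(* [u K] for any [u] with [u x0 = x]; quantifying over all such [u] avoids a choice. *)
Definition flag_coset_pred (x : X) : seq 'I_n -> Prop :=
  fun v => exists u, act X u x0 = x /\ K (rev u ++ v).

Lemma flag_coset_predE {u x} : act X u x0 = x -> flag_coset_pred x = coset K u.
Proof.
move=> ux; apply: functional_extensionality => v.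
apply: propositional_extensionality; split; last by exists u.
move=> [u' [u'x Ku']].
have Suu' : stab X x0 (rev u ++ u').
  by rewrite /stab act_cat u'x -ux -act_cat (act_weq HX (weq_revK u)).
rewrite /coset; move: (Kcat _ _ (stab_sub_K _ Suu') Ku'); apply: Kweq.
by rewrite -catA; apply: weq_catl; apply: weq_cancelr.
Qed.

Lemma flag_coset_pred_coset x : exists u, flag_coset_pred x = coset K u.
Proof. by have [u ux] := HXc x0 x; exists u; apply: flag_coset_predE. Qed.

Definition flag_coset (x : X) : coset_premaniplex K :=
  exist _ (flag_coset_pred x) (flag_coset_pred_coset x).

Lemma covers_coset_premaniplex : covers X (coset_premaniplex K).
Proof.
exists flag_coset; split=> [S | i x].
  have [a Sa] := svalP S; exists (act X a x0).
  by apply: coset_flag_eq; rewrite Sa; apply: flag_coset_predE.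
have [u ux] := HXc x0 x; apply: coset_flag_eq.
rewrite (act_cosetE [:: i] (S := flag_coset x) (flag_coset_predE ux)) /=.
by apply: flag_coset_predE; rewrite /= ux.
Qed.

End CosetCover.

Theorem lemma5p6 (n m : nat) (X : adjsys n) (HX : is_premaniplex X)
  (HXc : connected X) (x0 : X)
  (Y : adjsys m) (HY : is_premaniplex Y)
  (eta : Y -> seq 'I_m -> seq 'I_n) (Heta : is_voltage Y eta)
  (Hpres : preserves_connectivity Y eta) (y0 : Y) (ups : seq 'I_m)
  (Hnorm : normalizes ups (zeta_preim Y eta y0 (stab X x0)))
  (HnotL : ~ stab Y y0 ups) :
  covers X (coset_premaniplex
    (zeta_image Y eta y0 (sub_meet (stab Y y0) (conj_sub (stab Y y0) ups)))).
Proof.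
have meet_cat : cat_closed (sub_meet (stab Y y0) (conj_sub (stab Y y0) ups)).
  apply: sub_meet_cat_closed; first exact: stab_cat_closed.
  exact: conj_sub_cat_closed (stab_weq_closed y0 HY) (stab_cat_closed y0).
apply: (covers_coset_premaniplex x0 HX HXc).
- exact: zeta_image_weq_closed.
- by apply: (zeta_image_cat_closed Heta y0 _ _ meet_cat) => w [].
- exact: stab_sub_zeta_image Heta Hpres y0 X x0 ups HX Hnorm.
Qed.
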